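(* Let $g\in\mathbb{Z}^+$, let $\mathcal{H}$ be a hierarchical generator with lineage $\mathcal{L}$ and $\mathrm{gap}(\mathcal{H})\le g$, and let $\varphi\in\mathcal{H}$. Then the family $\mathfrak{R}_g(\mathcal{H},\varphi)$ of all hierarchical generators $\mathcal{H}_*$ whose lineage $\mathcal{L}_*$ satisfies $\mathcal{L}\cup\{\varphi\}\subset\mathcal{L}_*$ and $\mathrm{gap}(\mathcal{H}_* )\le g$ has a least element $\bar{\mathcal{H}}$, i.e. its lineage $\bar{\mathcal{L}}$ is contained in the lineage of every member of the family. Moreover, for every $\psi\in(\bar{\mathcal{L}}\setminus\mathcal{L})\setminus\{\varphi\}$ there is an integer $k$ with $1\le k\le\lfloor\ell_\varphi/g\rfloor$ and $\psi\in\mathcal{O}^k(\varphi,-g,\mathfrak{B})$.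
   Context: Fix integers $d\ge1$, $n\ge2$, $m\ge2$; $s=n-1$, $p=m-1$. B-splines $\varphi^\ell_{\vec i}(\vec x)=\prod_kQ(n^\ell x_k-i_k)$ for $\ell\ge0$, $\vec i\in\mathbb{Z}^d$, $Q$ the uniform B-spline of order $m$ with knots $0,\dots,m$; $\mathfrak{B}$ the set of all of them, $\ell_\varphi$ the level; $\mathcal{B}^0=\{\varphi^0_{\vec i}:\vec i\in[-p:0]^d\}$. Children $\mathrm{ch}(\varphi^\ell_{\vec i})=\{\varphi^{\ell+1}_{\vec k}:n\vec i\le\vec k\le n\vec i+sm\}$, extended to sets by union. Cells $I^\ell_{\vec i}=\prod_k[i_kn^{-\ell},(i_k+1)n^{-\ell})$, cell children $\mathrm{ch}(I^\ell_{\vec i})=\{I^{\ell+1}_{\vec k}:n\vec i\le\vec k\le n\vec i+s\}$, $\mathrm{ch}^k$ iterated, $\mathrm{ch}^{-k}(I)=\{J:I\in\mathrm{ch}^k(J)\}$. $\mathbb{I}(\varphi^\ell_{\vec i})=\{I^\ell_{\vec k}:\vec i\le\vec k\le\vec i+p\}$, $\mathbb{I}^k(\varphi)=\mathrm{ch}^k(\mathbb{I}(\varphi))$ ($k\in\mathbb{Z}$), $\mathbb{B}^k(I)=\{\varphi\in\mathfrak{B}:I\in\mathbb{I}^{-k}(\varphi)\}$, extended to sets by union. $\mathcal{O}(\mathcal{F},j,\mathcal{H})=\mathbb{B}^j(\mathbb{I}(\mathcal{F}))\cap\mathcal{H}$, $\mathcal{O}(\varphi,j,\mathcal{H})=\mathcal{O}(\{\varphi\},j,\mathcal{H})$,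 $\mathcal{O}^{k+1}(\mathcal{F},j,\mathcal{H})=\mathcal{O}(\mathcal{O}^k(\mathcal{F},j,\mathcal{H}),j,\mathcal{H})$, $\mathcal{O}^1=\mathcal{O}$. A lineage is a finite $\mathcal{L}\subset\mathfrak{B}$ with $\mathcal{L}\subset\mathcal{B}^0\cup\mathrm{ch}(\mathcal{L})$; its hierarchical generator is $(\mathcal{B}^0\cup\mathrm{ch}(\mathcal{L}))\setminus\mathcal{L}$ (the lineage is determined by the generator). $\mathrm{gap}_{\mathcal{H}}(\varphi)=\sup\{g\in\mathbb{Z}:\mathcal{O}(\varphi,-g,\mathcal{H})\neq\emptyset\}$ for $\varphi\in\mathcal{H}$, and $\mathrm{gap}(\mathcal{H})=\max_{\varphi\in\mathcal{H}}\mathrm{gap}_{\mathcal{H}}(\varphi)$. *)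

From Stdlib Require Import ZArith List.
Import ListNotations.
Open Scope Z_scope.

(* A B-spline phi^l_i is represented by (l, i) with i : list Z of length d;
   a cell I^l_i likewise.  The map (l,i) |-> phi^l_i is injective. *)
Definition bs := (nat * list Z)%type.
Definition cell := (nat * list Z)%type.
Definition bset := bs -> Prop.
Definition cset := cell -> Prop.

Section Defs.
Variables (d n m : nat).
Let nZ := Z.of_nat n.
Let mZ := Z.of_nat m.
Let s := nZ - 1.
Let p := mZ - 1.

Definition lvl (phi : bs) : nat := fst phi.

Definition allB : bset := fun phi => length (snd phi) = d.

Definition B0 : bset := fun phi =>
  fst phi = 0%nat /\ length (snd phi) = d /\ Forall (fun i => -p <= i <= 0) (snd phi).

Definition bs_child (phi psi : bs) : Prop :=
  fst psi = S (fst phi) /\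
  Forall2 (fun i k => nZ * i <= k <= nZ * i + s * mZ) (snd phi) (snd psi).

Definition ch (L : bset) : bset := fun psi => exists phi, L phi /\ bs_child phi psi.

Definition cell_child (I J : cell) : Prop :=
  fst J = S (fst I) /\
  Forall2 (fun i k => nZ * i <= k <= nZ * i + s) (snd I) (snd J).

Definition chc (S0 : cset) : cset := fun J => exists I, S0 I /\ cell_child I J.

Fixpoint chc_n (k : nat) (S0 : cset) : cset :=
  match k with O => S0 | S k' => chc (chc_n k' S0) end.

Definition chc_z (k : Z) (S0 : cset) : cset :=
  if (0 <=? k) then chc_n (Z.to_nat k) S0
  else fun J => exists I, S0 I /\ chc_n (Z.to_nat (- k)) (eq J) I.

Definition II (phi : bs) : cset := fun I =>
  fst I = fst phi /\ Forall2 (fun i k => i <= k <= i + p) (snd phi) (snd I).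

Definition IIset (F : bset) : cset := fun I => exists phi, F phi /\ II phi I.

Definition IIk (k : Z) (phi : bs) : cset := chc_z k (II phi).

Definition BBk (k : Z) (C : cset) : bset := fun phi =>
  allB phi /\ exists I, C I /\ IIk (- k) phi I.

Definition Oset (F : bset) (j : Z) (H : bset) : bset := fun psi =>
  BBk j (IIset F) psi /\ H psi.

Fixpoint Oiter (k : nat) (F : bset) (j : Z) (H : bset) : bset :=
  match k with
  | O => F
  | S O => Oset F j H
  | S k' => Oset (Oiter k' F j H) j H
  end.

Definition finite_set (L : bset) : Prop := exists l : list bs, forall x, L x -> In x l.

Definition subset (A B : bset) : Prop := forall x, A x -> B x.

Definition lineage (L : bset) : Prop :=
  finite_set L /\ subset L allB /\ subset L (fun x => B0 x \/ ch L x).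

Definition gen (L : bset) : bset := fun x => (B0 x \/ ch L x) /\ ~ L x.

(* gap(H) <= g, i.e. max over phi in H of sup{g' : O(phi,-g',H) <> empty} <= g *)
Definition gap_le (H : bset) (g : Z) : Prop :=
  forall phi, H phi -> forall g' : Z,
    (exists psi, Oset (eq phi) (- g') H psi) -> g' <= g.

End Defs.

(* Write [overlaps a b k] when some cell of II(a) is a k-th generation cell
   descendant of a cell of II(b); then O(a, -k, H) contains b exactly when
   b is in H and [overlaps a b k], so gap(H) <= g means that no two members of
   H overlap at a depth exceeding g.

   Starting from phi, call a chain a sequence phi = x_0, x_1, ..., x_j of
   elements of the generator H of L in which each x_{i+1} is overlapped by x_i
   at depth exactly g.  The least lineage is Lbar = L u {chain elements}:
   - Lbar is a lineage because chain elements lie in H, hence in B^0 u ch(L);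
   - gap(gen Lbar) <= g follows from the gap bound of H, since overlaps are
     transported from a B-spline to its parent (one level shallower) and to
     its child (one level deeper), and an overlap at depth exactly g of a
     child of a chain element would extend the chain;
   - every admissible lineage Ls contains each chain element x_{i+1}: if not,
     descending from x_i through children inside Ls reaches an element of
     gen Ls overlapping x_{i+1} at depth > g, contradicting gap(gen Ls) <= g;
   - a chain of length k >= 1 is a witness of O^k(phi, -g, B), and the levels
     drop by g along the chain, so k <= l_phi / g. *)
From Stdlib Require Import ZArith List Lia Classical.
Import ListNotations.
Open Scope Z_scope.

Lemma Forall2_left_unique {A B} (R : A -> B -> Prop) :
  (forall a a' b, R a b -> R a' b -> a = a') ->
  forall l1 l2 l, Forall2 R l1 l -> Forall2 R l2 l -> l1 = l2.
Proof.
  intros HR l1 l2 l H; revert l2.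
  induction H; intros l2 H2; inversion H2; subst; f_equal; eauto.
Qed.

Lemma Forall2_map_l {A B C} (R : A -> C -> Prop) (R' : B -> C -> Prop) (f : A -> B) :
  (forall a c, R a c -> R' (f a) c) ->
  forall la lc, Forall2 R la lc -> Forall2 R' (map f la) lc.
Proof. intros Hf la lc H; induction H; simpl; auto. Qed.

Lemma Forall2_repeat_l {A B} (R : A -> B -> Prop) (a : A) (l : list B) :
  Forall (R a) l -> Forall2 R (repeat a (length l)) l.
Proof. intros H; induction H; simpl; auto. Qed.

Lemma Forall2_factor {A B C X} (R : A -> B -> Prop) (Q : B -> C -> Prop)
  (T : A -> X -> Prop) (U : X -> C -> Prop) :
  (forall a b c, R a b -> Q b c -> exists x, T a x /\ U x c) ->
  forall l1 l2 l3, Forall2 R l1 l2 -> Forall2 Q l2 l3 ->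
  exists lx, Forall2 T l1 lx /\ Forall2 U lx l3.
Proof.
  intros HRS l1 l2 l3 H; revert l3.
  induction H as [|a b l1 l2 Hab _ IH]; intros l3 H3;
    inversion H3 as [|b' c l2' l3' Hbc H3']; subst.
  - exists []; auto.
  - destruct (HRS _ _ _ Hab Hbc) as [x [Hax Hxc]].
    destruct (IH _ H3') as [lx [Hl1 Hl2]].
    exists (x :: lx); auto.
Qed.

(* A child of the B-spline
   with index s starts at some c in [N s, N s + (N-1) M]; its support cells
   are [c, c + M - 1]; the children of cell q are [N q, N q + N - 1]. *)

Lemma child_support_cell_coord (N M s c K : Z) : 2 <= N -> 2 <= M ->
  N * s <= c <= N * s + (N - 1) * M -> c <= K <= c + (M - 1) ->
  exists q, s <= q <= s + (M - 1) /\ N * q <= K <= N * q + (N - 1).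
Proof.
  intros HN HM Hc HK. exists (K / N).
  pose proof (Z.div_mod K N ltac:(lia)).
  pose proof (Z.mod_pos_bound K N ltac:(lia)).
  nia.
Qed.

Lemma support_child_cell_coord (N M s q K : Z) : 2 <= N -> 2 <= M ->
  s <= q <= s + (M - 1) -> N * q <= K <= N * q + (N - 1) ->
  exists c, N * s <= c <= N * s + (N - 1) * M /\ c <= K <= c + (M - 1).
Proof.
  intros HN HM Hq HK.
  destruct (Z_le_gt_dec (K - N * s) ((N - 1) * M)).
  - exists K. nia.
  - exists (N * s + (N - 1) * M). nia.
Qed.

Lemma cell_parent_coord_unique (N q q' K : Z) : 2 <= N ->
  N * q <= K <= N * q + (N - 1) -> N * q' <= K <= N * q' + (N - 1) -> q = q'.
Proof. intros. nia. Qed.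

Lemma chc_n_mono n k (S1 S2 : cset) : (forall x, S1 x -> S2 x) ->
  forall x, chc_n n k S1 x -> chc_n n k S2 x.
Proof.
  intros H; induction k as [|k IH]; simpl; intros x Hx; auto.
  destruct Hx as [I [HI Hc]]; exists I; auto.
Qed.

Lemma chc_n_chc n k C x : chc_n n k (chc n C) x -> chc_n n (S k) C x.
Proof.
  revert x; induction k as [|k IH]; intros x Hx; [exact Hx|].
  destruct Hx as [I [HI Hc]]; exists I; auto.
Qed.

Lemma chc_z_of_nat n k C x : chc_z n (Z.of_nat k) C x <-> chc_n n k C x.
Proof.
  unfold chc_z. rewrite (proj2 (Z.leb_le 0 (Z.of_nat k))) by lia.
  rewrite Nat2Z.id. reflexivity.
Qed.

Lemma chc_n_level n k C x :
  chc_n n k C x -> exists y, C y /\ fst x = (fst y + k)%nat.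
Proof.
  revert x; induction k as [|k IH]; intros x Hx; simpl in *.
  - exists x; split; [exact Hx | lia].
  - destruct Hx as [I [HI [Hl _]]]. destruct (IH _ HI) as [y [Hy Hly]].
    exists y; split; [exact Hy | lia].
Qed.

Definition overlaps (n m : nat) (a b : bs) (k : nat) : Prop :=
  exists I, II m a I /\ chc_n n k (II m b) I.

Lemma overlaps_level n m a b k : overlaps n m a b k -> fst a = (fst b + k)%nat.
Proof.
  intros [I [[HIa _] HI]]. destruct (chc_n_level _ _ _ _ HI) as [y [[Hy _] Hl]].
  lia.
Qed.

(* Finiteness.  The integer vectors in a box [lo_1,hi_1] x ... x [lo_d,hi_d]
   are listed explicitly; B^0 and the children of a finite set lie in finitely
   many boxes. *)

Definition zrange (lo hi : Z) : list Z :=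
  map (fun k => lo + Z.of_nat k) (seq 0 (Z.to_nat (hi - lo + 1))).

Lemma in_zrange lo hi x : lo <= x <= hi -> In x (zrange lo hi).
Proof.
  intros H. apply in_map_iff. exists (Z.to_nat (x - lo)).
  split; [lia | apply in_seq; lia].
Qed.

Definition in_box (b : Z * Z) (x : Z) : Prop := fst b <= x <= snd b.

Fixpoint box_points (bx : list (Z * Z)) : list (list Z) :=
  match bx with
  | [] => [[]]
  | (lo, hi) :: bx' => flat_map (fun x => map (cons x) (box_points bx')) (zrange lo hi)
  end.

Lemma in_box_points bx l : Forall2 in_box bx l -> In l (box_points bx).
Proof.
  intros H; induction H as [|[lo hi] x bx l Hx _ IH]; simpl; [auto|].
  apply in_flat_map. exists x. split; [apply in_zrange; exact Hx | apply in_map; exact IH].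
Qed.

Lemma finite_union (A B C : bset) : finite_set A -> finite_set B ->
  subset C (fun x => A x \/ B x) -> finite_set C.
Proof.
  intros [la Ha] [lb Hb] H. exists (la ++ lb). intros x Hx.
  apply in_or_app. destruct (H x Hx); auto.
Qed.

Lemma B0_finite d m : finite_set (B0 d m).
Proof.
  exists (map (pair 0%nat) (box_points (repeat (-(Z.of_nat m - 1), 0) d))).
  intros [l x] [Hl [Hd Hx]]; simpl in *; subst.
  apply in_map, in_box_points. apply Forall2_repeat_l.
  revert Hx; apply Forall_impl; unfold in_box; simpl; lia.
Qed.

Lemma ch_finite n m L : finite_set L -> finite_set (ch n m L).
Proof.
  intros [lL HL].
  exists (flat_map (fun a => map (pair (S (fst a))) (box_points
    (map (fun i => (Z.of_nat n * i, Z.of_nat n * i + (Z.of_nat n - 1) * Z.of_nat m))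
       (snd a)))) lL).
  intros [l x] [a [Ha [Hl Hx]]]. apply in_flat_map. exists a. split; [auto|].
  simpl in *; subst. apply in_map, in_box_points.
  revert Hx; apply Forall2_map_l; unfold in_box; simpl; lia.
Qed.

Lemma finite_level_bound (Ls : bset) :
  finite_set Ls -> exists B, forall x, Ls x -> (fst x <= B)%nat.
Proof.
  intros [l Hl]. exists (list_max (map fst l)). intros x Hx.
  apply (proj1 (Forall_forall _ _) (proj1 (list_max_le _ _) (le_n _))).
  apply in_map; auto.
Qed.

Lemma gen_allB d n m L x : subset L (allB d) -> gen d n m L x -> allB d x.
Proof.
  intros HL [[[_ [Hd _]] | [a [Ha [_ Hc]]]] _]; [exact Hd|].
  unfold allB. rewrite <- (Forall2_length Hc). apply HL, Ha.
Qed.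

Lemma overlaps_Oset d n m (F H : bset) a b k : F a -> allB d b -> H b ->
  overlaps n m a b k -> Oset d n m F (- Z.of_nat k) H b.
Proof.
  intros Fa Hb HHb [I [HI Hc]]. split; [|exact HHb]. split; [exact Hb|].
  exists I. split; [exists a; auto|].
  unfold IIk. rewrite Z.opp_involutive. apply chc_z_of_nat, Hc.
Qed.

Lemma gap_le_overlaps d n m H g a b k : gap_le d n m H g -> H a -> H b ->
  allB d b -> overlaps n m a b k -> Z.of_nat k <= g.
Proof.
  intros Hg Ha Hb HBb Hab. apply (Hg a Ha). exists b.
  apply (overlaps_Oset d n m (eq a) H a); auto.
Qed.

Lemma overlaps_gap_le d n m (H : bset) g : 0 < g ->
  (forall a b k, H a -> H b -> overlaps n m a b k -> Z.of_nat k <= g) ->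
  gap_le d n m H g.
Proof.
  intros Hg HH a Ha g' [b [[_ [I [[a' [<- HI]] Hc]]] Hb]].
  destruct (Z_le_gt_dec g' 0); [lia|].
  unfold IIk in Hc. rewrite Z.opp_involutive, <- (Z2Nat.id g') in Hc by lia.
  apply chc_z_of_nat in Hc.
  pose proof (HH a b (Z.to_nat g') Ha Hb (ex_intro _ I (conj HI Hc))). lia.
Qed.

Section Refinement.
Variables n m : nat.
Hypothesis hn : (2 <= n)%nat.
Hypothesis hm : (2 <= m)%nat.

Lemma child_support_cell rho c K : bs_child n m rho c -> II m c K ->
  exists K', II m rho K' /\ cell_child n K' K.
Proof.
  intros [Hc1 Hc2] [HK1 HK2].
  destruct (Forall2_factor _ _ _ _
    (fun s c K => child_support_cell_coord (Z.of_nat n) (Z.of_nat m) s c K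
       ltac:(lia) ltac:(lia)) _ _ _ Hc2 HK2) as [lx [H1 H2]].
  exists (fst rho, lx). split; split; simpl; auto; lia.
Qed.

Lemma support_child_cell a I J : II m a I -> cell_child n I J ->
  exists c, bs_child n m a c /\ II m c J.
Proof.
  intros [HI1 HI2] [HJ1 HJ2].
  destruct (Forall2_factor _ _ _ _
    (fun s q K => support_child_cell_coord (Z.of_nat n) (Z.of_nat m) s q K
       ltac:(lia) ltac:(lia)) _ _ _ HI2 HJ2) as [lx [H1 H2]].
  exists (S (fst a), lx). split; split; simpl; auto; lia.
Qed.

Lemma cell_parent_unique K K' I : cell_child n K I -> cell_child n K' I -> K = K'.
Proof.
  intros [H1 H2] [H1' H2']. destruct K as [k l], K' as [k' l']; simpl in *.
  f_equal; [lia|].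
  apply (Forall2_left_unique _
    (fun q q' K => cell_parent_coord_unique (Z.of_nat n) q q' K ltac:(lia))
    _ _ _ H2 H2').
Qed.

Lemma overlaps_parent_left rho c b j :
  bs_child n m rho c -> overlaps n m c b (S j) -> overlaps n m rho b j.
Proof.
  intros Hc [I [HI [K [HK Hcc]]]].
  destruct (child_support_cell _ _ _ Hc HI) as [K' [HK' Hcc']].
  rewrite (cell_parent_unique _ _ _ Hcc Hcc') in HK.
  exists K'; auto.
Qed.

Lemma overlaps_parent_right sg c a j :
  bs_child n m sg c -> overlaps n m a c j -> overlaps n m a sg (S j).
Proof.
  intros Hc [I [HI Hch]]. exists I; split; [exact HI|].
  apply chc_n_chc. revert Hch; apply chc_n_mono.
  intros K HK. destruct (child_support_cell _ _ _ Hc HK) as [K' [H1 H2]].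
  exists K'; auto.
Qed.

Lemma overlaps_deepen a b k :
  overlaps n m a b k -> exists c, bs_child n m a c /\ overlaps n m c b (S k).
Proof.
  intros [I [HI Hch]].
  set (J := (S (fst I), map (fun i => Z.of_nat n * i) (snd I))).
  assert (HJ : cell_child n I J).
  { split; [reflexivity|]. simpl. induction (snd I); constructor; auto; lia. }
  destruct (support_child_cell _ _ _ HI HJ) as [c [Hac HcJ]].
  exists c; split; [exact Hac|]. exists J; split; [exact HcJ|]. exists I; auto.
Qed.

(* Above a lineage, children can be followed down until they leave it; the
   first B-spline outside lies in the generator and overlaps more deeply. *)
Lemma overlap_escapes_lineage d (Ls : bset) a b k :
  finite_set Ls -> Ls a -> overlaps n m a b k ->
  exists e k', gen d n m Ls e /\ overlaps n m e b k' /\ (k < k')%nat.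
Proof.
  intros Hfin Ha Hab. destruct (finite_level_bound _ Hfin) as [B HB].
  assert (Hroom : (B < fst a + S B)%nat) by lia.
  revert a k Ha Hab Hroom. generalize (S B) as N.
  induction N as [|N IH]; intros a k Ha Hab Hroom; [specialize (HB a Ha); lia|].
  destruct (overlaps_deepen a b k Hab) as [c [Hac Hcb]].
  destruct (classic (Ls c)) as [Hc|Hc].
  - destruct (IH c (S k) Hc Hcb) as [e [k' [He [Heb Hk]]]];
      [destruct Hac as [Hl _]; lia|].
    exists e, k'; split; [exact He | split; [exact Heb | lia]].
  - exists c, (S k); split; [split; [right; exists a; auto | exact Hc] |].
    split; [exact Hcb | lia].
Qed.

End Refinement.

Lemma Oiter_S d n m k F j H :
  Oiter d n m (S k) F j H = Oset d n m (Oiter d n m k F j H) j H.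
Proof. destruct k; reflexivity. Qed.

Section LeastRefinement.
Variables d n m : nat.
Hypothesis hn : (2 <= n)%nat.
Hypothesis hm : (2 <= m)%nat.
Variable g : nat.
Variable L : bset.
Hypothesis hL : lineage d n m L.
Hypothesis hgap : gap_le d n m (gen d n m L) (Z.of_nat g).
Variable phi : bs.
Hypothesis hphi : gen d n m L phi.

Inductive chain : bs -> nat -> Prop :=
| chain_start : chain phi 0
| chain_step a b k : chain a k -> gen d n m L b -> overlaps n m a b g -> chain b (S k).

Definition completion : bset := fun x => L x \/ exists k, chain x k.

Lemma gen_L_allB x : gen d n m L x -> allB d x.
Proof. apply gen_allB, hL. Qed.

Lemma chain_gen x k : chain x k -> gen d n m L x.
Proof. intros H; induction H; auto. Qed.

Lemma chain_level x k : chain x k -> fst phi = (fst x + k * g)%nat.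
Proof.
  intros H; induction H as [|a b k _ IH _ Hab]; [lia|].
  apply overlaps_level in Hab. lia.
Qed.

Lemma chain_Oiter x k :
  chain x k -> Oiter d n m k (eq phi) (- Z.of_nat g) (allB d) x.
Proof.
  intros H; induction H as [|a b k Hk IH Gb Hab]; [reflexivity|].
  rewrite Oiter_S. apply (overlaps_Oset d n m _ _ a); auto using gen_L_allB.
Qed.

Lemma gen_overlap_bound a b k : gen d n m L a -> gen d n m L b ->
  overlaps n m a b k -> (k <= g)%nat.
Proof.
  intros Ha Hb Hab.
  pose proof (gap_le_overlaps _ _ _ _ _ _ _ _ hgap Ha Hb (gen_L_allB b Hb) Hab).
  lia.
Qed.

Lemma gen_completion_cases x : gen d n m completion x ->
  gen d n m L x \/
  exists rho k, chain rho k /\ bs_child n m rho x.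
Proof.
  intros [[H | [a [[Ha | [k Ha]] Hc]]] Hn].
  - left. split; [left; exact H | intro; apply Hn; left; auto].
  - left. split; [right; exists a; auto | intro; apply Hn; left; auto].
  - right. exists a, k; auto.
Qed.

(* New elements lie in the generator of L, hence in B^0 u ch(L). *)
Lemma completion_lineage : lineage d n m completion.
Proof.
  destruct hL as [HLfin [HLB HLcl]].
  split; [|split].
  - apply (finite_union L (fun x => B0 d m x \/ ch n m L x)); [exact HLfin| |].
    + apply (finite_union (B0 d m) (ch n m L)); auto using B0_finite, ch_finite.
      intros x Hx; exact Hx.
    + intros x [H | [k H]]; [left; exact H | right; apply (chain_gen _ _ H)].
  - intros x [H | [k H]]; [apply HLB, H | apply gen_L_allB, (chain_gen _ _ H)].
  - intros x [H | [k H]].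
    + destruct (HLcl x H) as [H1 | [a [Ha Hc]]]; [left; exact H1|].
      right; exists a; split; [left|]; auto.
    + destruct (chain_gen _ _ H) as [[H1 | [a [Ha Hc]]] _]; [left; exact H1|].
      right; exists a; split; [left|]; auto.
Qed.

(* Overlaps involving children of chain elements are transported to
   overlaps between elements of the generator of L. *)
Lemma completion_gap (hg : (0 < g)%nat) :
  gap_le d n m (gen d n m completion) (Z.of_nat g).
Proof.
  apply overlaps_gap_le; [lia|]. intros a b k Ha Hb Hab. apply inj_le.
  destruct (gen_completion_cases a Ha) as [Ga | [rho [kr [Crho Hra]]]];
  destruct (gen_completion_cases b Hb) as [Gb | [sg [? [Csg Hsb]]]].
  - exact (gen_overlap_bound a b k Ga Gb Hab).
  - pose proof (gen_overlap_bound a sg (S k) Ga (chain_gen _ _ Csg)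
      (overlaps_parent_right n m hn hm sg b a k Hsb Hab)). lia.
  - destruct k as [|k]; [lia|].
    pose proof (overlaps_parent_left n m hn hm rho a b k Hra Hab) as Hrb.
    pose proof (gen_overlap_bound rho b k (chain_gen _ _ Crho) Gb Hrb).
    (* depth exactly g would put b on the chain after rho *)
    assert (k <> g) by (intros ->; apply (proj2 Hb); right; exists (S kr);
      exact (chain_step rho b kr Crho Gb Hrb)).
    lia.
  - destruct k as [|k]; [lia|].
    pose proof (gen_overlap_bound rho sg (S k) (chain_gen _ _ Crho) (chain_gen _ _ Csg)
      (overlaps_parent_right n m hn hm sg b rho k Hsb
         (overlaps_parent_left n m hn hm rho a b k Hra Hab))). lia.
Qed.

Lemma completion_least (Ls : bset) : lineage d n m Ls -> subset L Ls -> Ls phi ->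
  gap_le d n m (gen d n m Ls) (Z.of_nat g) -> subset completion Ls.
Proof.
  intros [HsF _] HLs Hphi Hsgap x [Hx | [k Hk]]; [apply HLs, Hx|].
  induction Hk as [|a b k _ IH Gb Hab]; [exact Hphi|].
  apply NNPP; intros Hb.
  destruct (overlap_escapes_lineage n m hn hm d Ls a b g HsF IH Hab)
    as [e [k' [He [Heb Hk']]]].
  assert (Gsb : gen d n m Ls b).
  { destruct Gb as [[H | [a' [Ha' Hc]]] _]; split; auto. right; exists a'; auto. }
  pose proof (gap_le_overlaps _ _ _ _ _ _ _ _ Hsgap He Gsb (gen_L_allB b Gb) Heb).
  lia.
Qed.

Lemma completion_new_elements (hg : (0 < g)%nat) psi :
  completion psi -> ~ L psi -> psi <> phi ->
  exists k : nat, (1 <= k)%nat /\ Z.of_nat k <= Z.of_nat (lvl phi) / Z.of_nat g /\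
    Oiter d n m k (eq phi) (- Z.of_nat g) (allB d) psi.
Proof.
  intros [H | [k Hk]] HnL Hne; [contradiction|].
  exists k. split; [|split].
  - destruct Hk; [contradiction | lia].
  - apply Z.div_le_lower_bound; [lia|].
    pose proof (chain_level _ _ Hk). unfold lvl. nia.
  - apply chain_Oiter, Hk.
Qed.

End LeastRefinement.

Theorem lemma8p2 (d n m : nat) (hd : (1 <= d)%nat) (hn : (2 <= n)%nat) (hm : (2 <= m)%nat)
  (g : Z) (hg : 0 < g) (L : bset) (hL : lineage d n m L)
  (hgap : gap_le d n m (gen d n m L) g) (phi : bs) (hphi : gen d n m L phi) :
  exists Lbar : bset,
    lineage d n m Lbar /\ subset L Lbar /\ Lbar phi /\ gap_le d n m (gen d n m Lbar) g /\
    (forall Ls : bset, lineage d n m Ls -> subset L Ls -> Ls phi ->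
       gap_le d n m (gen d n m Ls) g -> subset Lbar Ls) /\
    (forall psi : bs, Lbar psi -> ~ L psi -> psi <> phi ->
       exists k : nat, (1 <= k)%nat /\ Z.of_nat k <= Z.of_nat (lvl phi) / g /\
         Oiter d n m k (eq phi) (- g) (allB d) psi).
Proof.
  rewrite <- (Z2Nat.id g) in hgap |- * by lia.
  assert (hg' : (0 < Z.to_nat g)%nat) by lia.
  exists (completion d n m (Z.to_nat g) L phi).
  split; [apply completion_lineage; assumption|].
  split; [intros x Hx; left; exact Hx|].
  split; [right; exists 0%nat; constructor|].
  split; [apply completion_gap; assumption|].
  split; [apply completion_least; assumption | apply completion_new_elements; assumption].
Qed.
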